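(* With the notation of the context, let $\lambda>0$ and define $\mathcal{G}_\lambda(x):=\{g(y): y\in\mathcal{C}_\lambda(x)\}$ and $\mathcal{G}(x):=\{g(y): y\in\mathcal{C}(x)\}$. For every $x$ such that $\hat y(x)\in\mathcal{C}(x)$, we have $\mathcal{G}_\lambda(x)\subseteq\mathcal{G}(x)$.
   Context: Classification with $C$ classes, labels in $[C]=\{1,\dots,C\}$. A classifier outputs a softmax vector $\hat\pi(x)\in\mathbb{R}^C$ and predicted class $\hat y(x)=\arg\max_i \hat\pi_i(x)$. A map $g:[C]\to[G]$ partitions the classes into $G$ groups. Define $d(y,y'):=\mathbb{I}\{g(y)\neq g(y')\}$. Given any real-valued score function $s(x,y)$ and $\lambda>0$, define the penalized score $s_\lambda(x,y):=s(x,y)+\lambda\, d(y,\hat y(x))$. Given a calibration set $\{(x_i,y_i)\}_{i=1}^n$ and $\alpha\in(0,1)$ with $\lceil (n+1)(1-\alpha)\rceil\le n$, $\hat q$ (resp. $\hat q_\lambda$) is the $\lceil (n+1)(1-\alpha)\rceil$-th smallest value of $\{s(x_i,y_i)\}_{i=1}^n$ (resp. $\{s_\lambda(x_i,y_i)\}_{i=1}^n$). Prediction sets: $\mathcal{C}(x)=\{y: s(x,y)\le\hat q\}$, $\mathcal{C}_\lambda(x)=\{y: s_\lambda(x,y)\le\hat q_\lambda\}$. *)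

From mathcomp Require Import all_boot all_order all_algebra.
Set Implicit Arguments. Unset Strict Implicit. Unset Printing Implicit Defensive.
Import Order.TTheory GRing.Theory Num.Theory.
Local Open Scope ring_scope.

Section ConformalDefs.
Variables (R : archiRealFieldType) (X : Type) (C G : nat).

Definition gdist (g : 'I_C -> 'I_G) (y y' : 'I_C) : R :=
  if g y != g y' then 1 else 0.

Definition pen_score (g : 'I_C -> 'I_G) (yhat : X -> 'I_C)
  (s : X -> 'I_C -> R) (lambda : R) (x : X) (y : 'I_C) : R :=
  s x y + lambda * gdist g y (yhat x).

(* k-th smallest value (k >= 1) of the multiset {v i | i < n} *)
Definition kth_smallest (n k : nat) (v : 'I_n -> R) : R :=
  nth 0 (sort <=%R [seq v i | i <- enum 'I_n]) k.-1.

Definition qindex (n : nat) (alpha : R) : int :=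
  Num.ceil ((n.+1)%:R * (1 - alpha)).

Definition conf_quantile (n : nat) (alpha : R) (sc : X -> 'I_C -> R)
  (xs : 'I_n -> X) (ys : 'I_n -> 'I_C) : R :=
  kth_smallest (absz (qindex n alpha)) (fun i => sc (xs i) (ys i)).

Definition pred_set (sc : X -> 'I_C -> R) (q : R) (x : X) : {set 'I_C} :=
  [set y | sc x y <= q].

Definition group_set (g : 'I_C -> 'I_G) (S : {set 'I_C}) : {set 'I_G} :=
  g @: S.

End ConformalDefs.

From mathcomp Require Import all_boot all_order all_algebra.
Import Order.TTheory GRing.Theory Num.Theory.
Local Open Scope ring_scope.

(* Penalizing by [lambda * d] raises a score by at most [lambda], so the order
   statistic defining [qhat_lam] is at most [qhat + lambda]. A label [y] kept
   by the penalized set is either in the group of [yhat x], which [C(x)]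
   already covers, or pays the full penalty: then
   [s x y + lambda <= qhat_lam <= qhat + lambda], i.e. [y] is in [C(x)]. *)

Section SortedOrderStatistics.
Local Open Scope order_scope.
Variables (disp : Order.disp_t) (T : orderType disp) (x0 : T).

Lemma nth_sort_count_le (s : seq T) k :
  (k < size s)%N -> (k < count (<= nth x0 (sort <=%O s) k) s)%N.
Proof.
move=> ks; set b := sort _ s; set t := nth x0 b k.
have bs : size b = size s by rewrite size_sort.
rewrite -(permP (permEl (perm_sort <=%O s))) -/b ltnNge; apply/negP => cnt.
have kb : (count (<= t) b <= k < size b)%N by rewrite cnt bs ks.
by have := nth_count_gt x0 (sort_le_sorted s) kb; rewrite ltxx.
Qed.

Lemma nth_sort_map_le (I : Type) (r : seq I) (v w : I -> T) k :
  (forall i, v i <= w i) ->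
  nth x0 (sort <=%O (map v r)) k <= nth x0 (sort <=%O (map w r)) k.
Proof.
move=> vw; have [kr|rk] := ltnP k (size r); last first.
  by rewrite !nth_default ?size_sort ?size_map.
(* The [k.+1] values [w i] below [t] have their [v i] below [t] too. *)
set t := nth x0 (sort _ (map w r)) k.
apply: nth_count_le; first exact: sort_le_sorted.
rewrite (permP (permEl (perm_sort _ _))) !count_map.
have kw : (k < count (<= t) (map w r))%N by apply: nth_sort_count_le; rewrite size_map.
rewrite count_map in kw; apply: leq_trans kw _.
by apply: sub_count => i /=; apply: le_trans (vw i).
Qed.

End SortedOrderStatistics.

Lemma kth_smallest_le_homo (R : archiRealFieldType) n k (v w : 'I_n -> R) :
  (forall i, v i <= w i) -> kth_smallest k v <= kth_smallest k w.
Proof. exact: nth_sort_map_le. Qed.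

(* Beyond the sample size both order statistics are the default [0]. *)
Lemma kth_smallest_addr_le (R : archiRealFieldType) n k (v : 'I_n -> R) c :
  0 <= c -> kth_smallest k (fun i => v i + c) <= kth_smallest k v + c.
Proof.
move=> c_ge0; rewrite /kth_smallest (map_comp (+%R^~ c) v).
rewrite -(map_sort (fun x y => lerD2r c x y)).
set s := sort _ _; have [ks|ks] := ltnP k.-1 (size s).
  by rewrite (nth_map 0).
by rewrite !nth_default ?size_map // add0r.
Qed.

Section PenalizedScore.
Variables (R : archiRealFieldType) (X : Type) (C G : nat).
Variables (g : 'I_C -> 'I_G) (yhat : X -> 'I_C) (s : X -> 'I_C -> R) (lambda : R).

Lemma pen_score_le : 0 <= lambda ->
  forall x y, pen_score g yhat s lambda x y <= s x y + lambda.
Proof.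
move=> lambda_ge0 x y; rewrite /pen_score /gdist lerD2l.
by case: ifP => _; rewrite ?mulr1 ?mulr0.
Qed.

Lemma pen_score_other_group x y : g y != g (yhat x) ->
  pen_score g yhat s lambda x y = s x y + lambda.
Proof. by move=> gy; rewrite /pen_score /gdist gy mulr1. Qed.

Lemma conf_quantile_pen_le n alpha (xs : 'I_n -> X) (ys : 'I_n -> 'I_C) :
  0 <= lambda ->
  conf_quantile alpha (pen_score g yhat s lambda) xs ys <=
  conf_quantile alpha s xs ys + lambda.
Proof.
move=> lambda_ge0; rewrite /conf_quantile.
apply: le_trans (@kth_smallest_addr_le R n _ (fun i => s (xs i) (ys i)) _ lambda_ge0).
by apply: kth_smallest_le_homo => i; apply: pen_score_le.
Qed.

End PenalizedScore.

Theorem corollary1 (R : archiRealFieldType) (X : Type) (C G n : nat)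
  (g : 'I_C -> 'I_G) (pihat : X -> 'I_C -> R) (yhat : X -> 'I_C)
  (pihat_ge0 : forall x i, 0 <= pihat x i)
  (pihat_sum1 : forall x, \sum_(i < C) pihat x i = 1)
  (yhat_argmax : forall x i, pihat x i <= pihat x (yhat x))
  (s : X -> 'I_C -> R) (lambda alpha : R)
  (lambda_gt0 : 0 < lambda) (alpha_gt0 : 0 < alpha) (alpha_lt1 : alpha < 1)
  (xs : 'I_n -> X) (ys : 'I_n -> 'I_C)
  (hidx : (qindex n alpha <= n%:Z)%R) (x : X) :
  let qhat := conf_quantile alpha s xs ys in
  let slam := pen_score g yhat s lambda in
  let qhat_lam := conf_quantile alpha slam xs ys in
  yhat x \in pred_set s qhat x ->
  group_set g (pred_set slam qhat_lam x) \subset group_set g (pred_set s qhat x).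
Proof.
move=> qhat slam qhat_lam yhat_in; have lambda_ge0 := ltW lambda_gt0.
apply/subsetP => _ /imsetP[y y_in ->].
have [->|gy] := eqVneq (g y) (g (yhat x)); first exact: imset_f.
apply: imset_f; move: y_in; rewrite !inE /slam pen_score_other_group // => y_in.
rewrite -(lerD2r lambda); apply: le_trans y_in _.
exact: conf_quantile_pen_le.
Qed.
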